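(* Assume $CA_2$. Then there is a Suslin $\omega_1$-pretower, i.e. an $\omega_1$-pretower $\mathcal T$ on a countable set such that every uncountable $\mathcal A\subseteq\mathcal T$ contains distinct $A,B$ with $A\subseteq B$.
   Context: An $\omega_1$-pretower on a countably infinite set $X$ is a family $\mathcal T\subseteq[X]^\omega$ well ordered by $\subsetneq^*$ (where $A\subsetneq^*B$ means $A\setminus B$ is finite and $B\setminus A$ is infinite) with order type $\omega_1$. A type is a sequence $\tau=\{(m_k,n_{k+1},r_{k+1})\}_{k\in\omega}$ of natural numbers with $m_0=1$; $n_k\ge2$ for $k\ge1$; every $r\in\omega$ equals $r_k$ for infinitely many $k$; $m_k>r_{k+1}$; and $m_{k+1}=r_{k+1}+(m_k-r_{k+1})n_{k+1}$ for all $k$. For a set of ordinals $X$ and $\mathcal F\subseteq[X]^{<\omega}$, $\mathcal F_k$ is the set of elements of rank $k$ in $(\mathcal F,\subsetneq)$; $A\sqsubseteq B$ means $A\subseteq B$ and every element of $B$ below an element of $A$ is in $A$; $A<B$ means every element of $A$ is below every element of $B$. $\mathcal F$ is a construction scheme over $X$ of type $\tau$ if (1) every finite subset of $X$ lies in a member of $\mathcal F$; (2) $|F|=m_k$ for $F\in\mathcal F_k$; (3) $E\cap F\sqsubseteq E,F$ for $E,F\in\mathcal F_k$; (4) each $F\in\mathcal F_{k+1}$ is the union of uniquely determined $F_0,\dots,F_{n_{k+1}-1}\in\mathcal F_k$ forming a $\Delta$-system with root $R(F)$, $|R(F)|=r_{k+1}$, $R(F)<F_0\setminus R(F)<\dots<F_{n_{k+1}-1}\setminus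 R(F)$. For a construction scheme $\mathcal F$ over $\omega_1$, $l\ge1$, $F\in\mathcal F_l$ and finite $\mathcal C\subseteq[\omega_1]^{<\omega}$: $F$ captures $\mathcal C$ if $|\mathcal C|\le n_l$ and $\mathcal C$ can be enumerated as $\{c_i\}_{i<|\mathcal C|}$ with $c_i\subseteq F_i$, $c_i\setminus R(F)\neq\emptyset$ and $\phi_i[c_0]=c_i$ where $\phi_i:F_0\to F_i$ is the increasing bijection. $\mathcal F$ is $n$-capturing if for every uncountable $S\subseteq[\omega_1]^{<\omega}$ and every $k\in\omega$ there are $\mathcal C\in[S]^n$, $l>k$ and $F\in\mathcal F_l$ capturing $\mathcal C$. $CA_n$ is the statement: for every type $\tau$ with $n\le n_k$ for all $k\ge1$ there is an $n$-capturing construction scheme over $\omega_1$ of type $\tau$. *)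

From Stdlib Require Import List Arith Sorting.Sorted Sorting.Permutation.
Import ListNotations.

Definition countable {U : Type} (P : U -> Prop) : Prop :=
  exists f : U -> nat, forall x y, P x -> P y -> f x = f y -> x = y.
Definition uncountable {U : Type} (P : U -> Prop) : Prop := ~ countable P.

Definition omega1_like {W : Type} (lt : W -> W -> Prop) : Prop :=
  (forall x, ~ lt x x) /\
  (forall x y z, lt x y -> lt y z -> lt x z) /\
  (forall x y, lt x y \/ x = y \/ lt y x) /\
  well_founded lt /\
  uncountable (fun _ : W => True) /\
  (forall x, countable (fun y => lt y x)).

Definition infinite_nat (A : nat -> Prop) : Prop :=
  forall n, exists m, n <= m /\ A m.
Definition finite_nat (A : nat -> Prop) : Prop :=
  exists n, forall m, A m -> m < n.
Definition almost_psub (A B : nat -> Prop) : Prop :=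
  finite_nat (fun x => A x /\ ~ B x) /\ infinite_nat (fun x => B x /\ ~ A x).

Definition omega1_pretower (T : (nat -> Prop) -> Prop) : Prop :=
  (forall A, T A -> infinite_nat A) /\
  (forall A B, T A -> T B -> A <> B -> almost_psub A B \/ almost_psub B A) /\
  well_founded (fun A B => T A /\ T B /\ almost_psub A B) /\
  uncountable T /\
  (forall A, T A -> countable (fun B => T B /\ almost_psub B A)).

Definition suslin (T : (nat -> Prop) -> Prop) : Prop :=
  forall AA : (nat -> Prop) -> Prop,
    (forall A, AA A -> T A) -> uncountable AA ->
    exists A B, AA A /\ AA B /\ A <> B /\ (forall x, A x -> B x).

(** A type {(m_k, n_{k+1}, r_{k+1})}_k; the values tn 0 and tr 0 are unused. *)
Record cs_type := { tm : nat -> nat; tn : nat -> nat; tr : nat -> nat }.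

Definition is_type (t : cs_type) : Prop :=
  tm t 0 = 1 /\
  (forall k, 1 <= k -> 2 <= tn t k) /\
  (forall r N, exists k, N <= k /\ tr t k = r) /\
  (forall k, tr t (S k) < tm t k) /\
  (forall k, tm t (S k) = tr t (S k) + (tm t k - tr t (S k)) * tn t (S k)).

Section CS.
Context {W : Type} (lt : W -> W -> Prop).

(** finite subsets of W are represented canonically by lt-increasing lists *)
Definition incr (l : list W) : Prop := StronglySorted lt l.

Definition psub (E F : list W) : Prop := incl E F /\ ~ incl F E.

Definition chain_below (Fam : list W -> Prop) (F : list W) (k : nat) : Prop :=
  exists ch : list (list W),
    length ch = k /\ Forall Fam ch /\ Sorted psub (ch ++ [F]).

Definition rank (Fam : list W -> Prop) (F : list W) (k : nat) : Prop :=
  Fam F /\ chain_below Fam F k /\ ~ chain_below Fam F (S k).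

Definition lt_sets (A B : W -> Prop) : Prop :=
  forall x y, A x -> B y -> lt x y.

Definition init_seg (A : W -> Prop) (B : list W) : Prop :=
  (forall x, A x -> In x B) /\
  (forall x y, A x -> In y B -> lt y x -> A y).

(** F in Fam_{k+1} is the union of Fs = [F_0; ...; F_{n_{k+1}-1}] in Fam_k
    forming a Delta-system with root R, |R| = r_{k+1},
    R < F_0 \ R < ... < F_{n_{k+1}-1} \ R. *)
Definition decomp (Fam : list W -> Prop) (t : cs_type) (k : nat)
    (F : list W) (Fs : list (list W)) (R : list W) : Prop :=
  length Fs = tn t (S k) /\
  Forall (fun E => rank Fam E k) Fs /\
  (forall x, In x F <-> exists E, In E Fs /\ In x E) /\
  (forall i j Ei Ej, i <> j -> nth_error Fs i = Some Ei ->
     nth_error Fs j = Some Ej -> forall x, (In x Ei /\ In x Ej) <-> In x R) /\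
  incr R /\ length R = tr t (S k) /\
  (forall E0, nth_error Fs 0 = Some E0 ->
     lt_sets (fun x => In x R) (fun x => In x E0 /\ ~ In x R)) /\
  (forall i Ei Ej, nth_error Fs i = Some Ei -> nth_error Fs (S i) = Some Ej ->
     lt_sets (fun x => In x Ei /\ ~ In x R) (fun x => In x Ej /\ ~ In x R)).

Definition construction_scheme (t : cs_type) (Fam : list W -> Prop) : Prop :=
  (forall F, Fam F -> incr F) /\
  (forall l : list W, exists F, Fam F /\ incl l F) /\
  (forall k F, rank Fam F k -> length F = tm t k) /\
  (forall k E F, rank Fam E k -> rank Fam F k ->
     init_seg (fun x => In x E /\ In x F) E /\
     init_seg (fun x => In x E /\ In x F) F) /\
  (forall k F, rank Fam F (S k) ->
     exists Fs R, decomp Fam t k F Fs R /\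
       forall Fs' R', decomp Fam t k F Fs' R' -> Fs' = Fs /\ R' = R).

(** x is in phi_i[c0], where phi_i : F0 -> Fi is the increasing bijection *)
Definition phi_image (F0 Fi c0 : list W) (x : W) : Prop :=
  exists j y, nth_error F0 j = Some y /\ In y c0 /\ nth_error Fi j = Some x.

Definition captures (Fam : list W -> Prop) (t : cs_type) (l : nat)
    (F : list W) (C : list (list W)) : Prop :=
  1 <= l /\ rank Fam F l /\ NoDup C /\ length C <= tn t l /\
  exists Fs R, decomp Fam t (l - 1) F Fs R /\
    exists cs, Permutation C cs /\
      (forall i ci, nth_error cs i = Some ci ->
         exists Fi, nth_error Fs i = Some Fi /\ incl ci Fi /\
           (exists x, In x ci /\ ~ In x R) /\
           exists c0 F0, nth_error cs 0 = Some c0 /\ nth_error Fs 0 = Some F0 /\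
             (forall x, In x ci <-> phi_image F0 Fi c0 x)).

Definition n_capturing (Fam : list W -> Prop) (t : cs_type) (n : nat) : Prop :=
  forall S : list W -> Prop, (forall c, S c -> incr c) -> uncountable S ->
  forall k, exists (C : list (list W)) (l : nat) (F : list W),
    NoDup C /\ length C = n /\ Forall S C /\ k < l /\ captures Fam t l F C.

Definition CA (n : nat) : Prop :=
  forall t : cs_type, is_type t -> (forall k, 1 <= k -> n <= tn t k) ->
    exists Fam : list W -> Prop, construction_scheme t Fam /\ n_capturing Fam t n.

End CS.

(* Fix a 2-capturing construction scheme of a type with all n_k = 2.  By coherence,
   the index of an ordinal a inside a member of rank k containing it depends only on
   k and a; call it i_k(a), and let A_a = {(k, i) : i <= i_k(a)} (coded into nat).
   If a < b, then from some level on a and b lie in a common member, so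
   i_k(a) < i_k(b): the sets A_a form an omega_1-pretower.  Given uncountably many
   a, capture two singletons {a}, {b} by a member F of rank l: a and b have the same
   index in the blocks F_0 and F_1 of rank l - 1, hence the same index at every level
   below l, while from level l on a < b lie in a common member.  So A_a is a subset
   of A_b. *)

From Stdlib Require Import List Arith Lia Sorting.Sorted Sorting.Permutation.
From Stdlib Require Import Classical ClassicalEpsilon Cantor.
Import ListNotations.

Lemma StronglySorted_impl {A : Type} (R R' : A -> A -> Prop) (l : list A) :
  (forall a b, R a b -> R' a b) -> StronglySorted R l -> StronglySorted R' l.
Proof.
  intros HR. induction 1; constructor; auto.
  eapply Forall_impl; [|eassumption]. auto.
Qed.

Lemma Sorted_of_nth_error {A : Type} (R : A -> A -> Prop) (l : list A) :
  (forall i a b, nth_error l i = Some a -> nth_error l (S i) = Some b -> R a b) ->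
  Sorted R l.
Proof.
  induction l as [|a l IH]; intros H; constructor.
  - apply IH. intros i x y Hx Hy. apply (H (S i)); auto.
  - destruct l as [|b l]; constructor. apply (H 0); reflexivity.
Qed.

Lemma nth_error_concat_same_shape {A : Type} (B B' : list (list A)) :
  length B = length B' ->
  (forall i d d', nth_error B i = Some d -> nth_error B' i = Some d' ->
     length d = length d') ->
  forall j x, nth_error (concat B) j = Some x ->
  exists a d d' o, nth_error B a = Some d /\ nth_error B' a = Some d' /\
    nth_error d o = Some x /\ nth_error (concat B') j = nth_error d' o.
Proof.
  revert B'. induction B as [|d B IH]; intros [|d' B'] HL HD j x Hj;
    simpl in *; try discriminate.
  - destruct j; discriminate.
  - assert (Hdd : length d = length d') by (apply (HD 0); reflexivity).
    destruct (Nat.lt_ge_cases j (length d)) as [Hlt|Hge].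
    + rewrite nth_error_app1 in Hj by lia. exists 0, d, d', j.
      repeat split; auto. rewrite nth_error_app1 by lia. reflexivity.
    + rewrite nth_error_app2 in Hj by lia.
      destruct (IH B' ltac:(lia) (fun i => HD (S i)) _ _ Hj)
        as (a & e & e' & o & H1 & H2 & H3 & H4).
      exists (S a), e, e', o. repeat split; auto.
      rewrite nth_error_app2 by lia. rewrite <- Hdd. exact H4.
Qed.

Lemma psub_length_lt {W : Type} (a b : list W) :
  NoDup a -> NoDup b -> psub a b -> length a < length b.
Proof.
  intros Na Nb [Hab Hba]. pose proof (NoDup_incl_length Na Hab).
  destruct (Nat.eq_dec (length a) (length b)) as [E|E]; [|lia].
  exfalso. apply Hba. apply NoDup_length_incl; auto. lia.
Qed.

Lemma psub_chain_length {W : Type} (ch : list (list W)) : forall x F,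
  Sorted psub (x :: ch ++ [F]) -> Forall (@NoDup W) (x :: ch) -> NoDup F ->
  length x + length ch < length F.
Proof.
  induction ch as [|y ch IH]; intros x F HS HN NF; simpl in *;
    apply Sorted_inv in HS as [HS Hxy]; apply HdRel_inv in Hxy;
    pose proof (Forall_inv HN) as Nx; apply Forall_inv_tail in HN.
  - pose proof (psub_length_lt _ _ Nx NF Hxy). lia.
  - pose proof (psub_length_lt _ _ Nx (Forall_inv HN) Hxy).
    specialize (IH y F HS HN NF). lia.
Qed.

Lemma exists_last_of_bounded (P : nat -> Prop) N :
  P 0 -> (forall c, P c -> c <= N) -> exists c, P c /\ ~ P (S c).
Proof.
  intros H0 HB. apply NNPP. intros Hn.
  assert (Hall : forall c, P c).
  { induction c; auto. apply NNPP. intros Hc. apply Hn. eauto. }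
  specialize (HB (S N) (Hall _)). lia.
Qed.

Lemma uncountable_long_NoDup {W : Type} :
  uncountable (fun _ : W => True) -> forall N, exists l : list W, NoDup l /\ length l = N.
Proof.
  intros Hunc. induction N as [|N (l & Nl & Ll)].
  - exists []. split; auto. constructor.
  - destruct (classic (exists w, ~ In w l)) as [(w & Hw)|Hn].
    + exists (w :: l). split; simpl; auto. constructor; auto.
    + exfalso. apply Hunc.
      exists (fun w => epsilon (inhabits 0) (fun j => nth_error l j = Some w)).
      intros x y _ _ E.
      assert (Hin : forall w, exists j, nth_error l j = Some w).
      { intros w. apply In_nth_error. apply NNPP. intros Hw. apply Hn; eauto. }
      pose proof (epsilon_spec (inhabits 0) _ (Hin x)) as Ex.
      pose proof (epsilon_spec (inhabits 0) _ (Hin y)) as Ey.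
      simpl in *. rewrite E in Ex. congruence.
Qed.

Section StronglySortedLists.
Context {W : Type} (lt : W -> W -> Prop).
Hypothesis lt_irrefl : forall x, ~ lt x x.
Hypothesis lt_trans : forall x y z, lt x y -> lt y z -> lt x z.

Lemma StronglySorted_app_iff (l1 l2 : list W) :
  StronglySorted lt (l1 ++ l2) <->
  StronglySorted lt l1 /\ StronglySorted lt l2 /\
  (forall x y, In x l1 -> In y l2 -> lt x y).
Proof.
  induction l1 as [|a l1 IH]; simpl.
  - split.
    + intros H. repeat split; auto; [constructor|intros ? ? []].
    + intros (_ & H & _). exact H.
  - split.
    + intros H. apply StronglySorted_inv in H as [H1 H2].
      apply IH in H1 as (A & B & C). rewrite Forall_forall in H2.
      repeat split; auto.
      * constructor; auto. rewrite Forall_forall. intros. apply H2, in_or_app; auto.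
      * intros x y [<-|Hx] Hy; auto. apply H2, in_or_app; auto.
    + intros (A & B & C). apply StronglySorted_inv in A as [A1 A2].
      constructor.
      * apply IH. repeat split; auto.
      * rewrite Forall_forall in *. intros x Hx.
        apply in_app_or in Hx as [Hx|Hx]; auto.
Qed.

Lemma StronglySorted_filter (f : W -> bool) (l : list W) :
  StronglySorted lt l -> StronglySorted lt (filter f l).
Proof.
  induction 1 as [|a l H IH HF]; simpl; [constructor|].
  destruct (f a); auto. constructor; auto.
  rewrite Forall_forall in *. intros x Hx. apply filter_In in Hx as [Hx _]; auto.
Qed.

Lemma StronglySorted_NoDup (l : list W) : StronglySorted lt l -> NoDup l.
Proof.
  induction 1 as [|a l H IH HF]; constructor; auto.
  rewrite Forall_forall in HF. intros Hin. apply (lt_irrefl a); auto.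
Qed.

Lemma StronglySorted_ext (l1 l2 : list W) :
  StronglySorted lt l1 -> StronglySorted lt l2 ->
  (forall x, In x l1 <-> In x l2) -> l1 = l2.
Proof.
  revert l2. induction l1 as [|a l1 IH]; intros [|b l2] H1 H2 E.
  - reflexivity.
  - exfalso. apply (E b). left; auto.
  - exfalso. apply (E a). left; auto.
  - apply StronglySorted_inv in H1 as [H1 F1].
    apply StronglySorted_inv in H2 as [H2 F2].
    rewrite Forall_forall in F1, F2.
    assert (a = b) as <-.
    { destruct (proj1 (E a) (or_introl eq_refl)) as [->|Ha]; auto.
      destruct (proj2 (E b) (or_introl eq_refl)) as [->|Hb]; auto.
      exfalso. apply (lt_irrefl a). apply lt_trans with b; auto. }
    f_equal. apply IH; auto. intros x. split; intros Hx.
    + destruct (proj1 (E x) (or_intror Hx)) as [->|Hx']; auto.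
      exfalso; apply (lt_irrefl x); auto.
    + destruct (proj2 (E x) (or_intror Hx)) as [->|Hx']; auto.
      exfalso; apply (lt_irrefl x); auto.
Qed.

Lemma StronglySorted_nth_error_lt (l : list W) : StronglySorted lt l ->
  forall i j a b, nth_error l i = Some a -> nth_error l j = Some b -> i < j -> lt a b.
Proof.
  induction 1 as [|c l H IH HF]; intros i j a b Ha Hb Hij.
  - destruct i; discriminate.
  - destruct j as [|j]; [lia|]. destruct i as [|i]; simpl in *.
    + injection Ha as <-. rewrite Forall_forall in HF. apply HF.
      eapply nth_error_In; eauto.
    + apply (IH i j); auto; lia.
Qed.

Lemma StronglySorted_nth_error_index_lt (l : list W) : StronglySorted lt l ->
  forall i j a b, nth_error l i = Some a -> nth_error l j = Some b -> lt a b -> i < j.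
Proof.
  intros H i j a b Ha Hb Hab.
  destruct (Nat.lt_trichotomy i j) as [?|[->|?]]; auto; exfalso.
  - rewrite Ha in Hb. injection Hb as ->. apply (lt_irrefl b); auto.
  - apply (lt_irrefl a). apply lt_trans with b; auto.
    eapply StronglySorted_nth_error_lt; eauto.
Qed.

Lemma StronglySorted_prefix_iff (l1 l2 : list W) x :
  StronglySorted lt (l1 ++ x :: l2) ->
  forall y, In y l1 <-> In y (l1 ++ x :: l2) /\ lt y x.
Proof.
  intros H y. apply StronglySorted_app_iff in H as (_ & B & C). split.
  - intros Hy. split; [apply in_or_app; auto|]. apply C; simpl; auto.
  - intros [Hy Hyx]. apply in_app_or in Hy as [Hy|[->|Hy]]; auto; exfalso.
    + apply (lt_irrefl y); auto.
    + apply StronglySorted_inv in B as [_ B]. rewrite Forall_forall in B.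
      apply (lt_irrefl x). apply lt_trans with y; auto.
Qed.

Definition list_lt (d d' : list W) : Prop :=
  forall x y, In x d -> In y d' -> lt x y.

Lemma StronglySorted_concat (B : list (list W)) :
  Forall (StronglySorted lt) B -> StronglySorted list_lt B ->
  StronglySorted lt (concat B).
Proof.
  intros HF HS. induction HS as [|d B HS IH HF2]; simpl; [constructor|].
  inversion HF; subst. apply StronglySorted_app_iff. repeat split; auto.
  intros x y Hx Hy. apply in_concat in Hy as (d' & Hd' & Hy).
  rewrite Forall_forall in HF2. apply (HF2 d'); auto.
Qed.

(* [list_lt] itself is transitive only through nonempty middle lists. *)
Definition nonempty_list_lt (d d' : list W) : Prop :=
  d <> [] /\ d' <> [] /\ list_lt d d'.

Lemma nonempty_list_lt_trans : Relations_1.Transitive nonempty_list_lt.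
Proof.
  intros a b c (A1 & A2 & A3) (B1 & B2 & B3). repeat split; auto.
  intros x y Hx Hy. destruct b as [|z b]; [congruence|].
  apply lt_trans with z; [apply A3|apply B3]; simpl; auto.
Qed.

End StronglySortedLists.

Lemma to_nat_le_mono k i K I : k <= K -> i <= I ->
  Cantor.to_nat (k, i) <= Cantor.to_nat (K, I).
Proof.
  intros. pose proof (Cantor.to_nat_spec k i). pose proof (Cantor.to_nat_spec K I). nia.
Qed.

Lemma almost_psub_irrefl X : ~ almost_psub X X.
Proof. intros [_ H]. destruct (H 0) as (m & _ & A & B). auto. Qed.

Lemma almost_psub_asym X Y : almost_psub X Y -> ~ almost_psub Y X.
Proof.
  intros [(n & Hn) _] [_ H]. destruct (H n) as (m & nm & A). specialize (Hn m A). lia.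
Qed.

Lemma countable_incl {U : Type} (P Q : U -> Prop) :
  (forall x, P x -> Q x) -> countable Q -> countable P.
Proof. intros HPQ (g & Hg). exists g. auto. Qed.

Lemma countable_image {U V : Type} (f : U -> V) (X : U -> Prop) :
  countable X -> countable (fun B => exists a, X a /\ B = f a).
Proof.
  intros (g & Hg). destruct (classic (inhabited U)) as [inh|ninh].
  - exists (fun B => g (epsilon inh (fun a => X a /\ B = f a))).
    intros B1 B2 H1 H2 E.
    destruct (epsilon_spec inh _ H1) as (X1 & E1).
    destruct (epsilon_spec inh _ H2) as (X2 & E2).
    rewrite E1, E2. f_equal. apply Hg; auto.
  - exists (fun _ => 0). intros B1 B2 (a & _) _ _. exfalso. exact (ninh (inhabits a)).
Qed.

Lemma suslin_image {U : Type} (f : U -> nat -> Prop) :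
  (forall X, uncountable X ->
     exists a b, X a /\ X b /\ f a <> f b /\ forall n, f a n -> f b n) ->
  suslin (fun A => exists a, A = f a).
Proof.
  intros Hf AA HAA Hu.
  destruct (Hf (fun a => AA (f a))) as (a & b & Ha & Hb & Hab & Hincl).
  - intros Hc. apply Hu.
    refine (countable_incl _ _ _ (countable_image f _ Hc)).
    intros A HA. destruct (HAA A HA) as (a & ->). eauto.
  - exists (f a), (f b). auto.
Qed.

Section PretowerOfEmbedding.
Context {W : Type} (lt : W -> W -> Prop) (f : W -> nat -> Prop).
Hypothesis lt_omega1 : omega1_like lt.
Hypothesis f_infinite : forall a, infinite_nat (f a).
Hypothesis f_strict_mono : forall a b, lt a b -> almost_psub (f a) (f b).

Lemma lt_of_almost_psub a b : almost_psub (f a) (f b) -> lt a b.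
Proof.
  intros H. pose proof lt_omega1 as (_ & _ & tri & _).
  destruct (tri a b) as [?|[->|ba]]; auto; exfalso.
  - exact (almost_psub_irrefl _ H).
  - exact (almost_psub_asym _ _ H (f_strict_mono b a ba)).
Qed.

Lemma strict_mono_inj a b : f a = f b -> a = b.
Proof.
  intros E. pose proof lt_omega1 as (_ & _ & tri & _).
  destruct (tri a b) as [ab|[->|ba]]; auto; exfalso.
  - pose proof (f_strict_mono a b ab) as H. rewrite E in H. exact (almost_psub_irrefl _ H).
  - pose proof (f_strict_mono b a ba) as H. rewrite E in H. exact (almost_psub_irrefl _ H).
Qed.

Lemma omega1_pretower_image : omega1_pretower (fun A => exists a, A = f a).
Proof.
  pose proof lt_omega1 as (_ & _ & tri & wf & unc & seg).
  split; [|split; [|split; [|split]]].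
  - intros A (a & ->). auto.
  - intros A B (a & ->) (b & ->) Hne.
    destruct (tri a b) as [ab|[->|ba]]; auto. congruence.
  - set (T := fun A => exists a, A = f a).
    assert (Hacc : forall a, Acc (fun A B => T A /\ T B /\ almost_psub A B) (f a)).
    { intros a. induction (wf a) as [a _ IH]. constructor.
      intros B ((b & ->) & _ & Hba). apply IH, lt_of_almost_psub, Hba. }
    intros A. destruct (classic (T A)) as [(a & ->)|nT]; auto.
    constructor. intros B (_ & TA & _). contradiction.
  - intros (g & Hg). apply unc. exists (fun a => g (f a)).
    intros a b _ _ E. apply strict_mono_inj, Hg; eauto.
  - intros A (a & ->).
    apply (countable_incl _ (fun B => exists b, lt b a /\ B = f b)).
    + intros B ((b & ->) & Hba). exists b. split; auto. apply lt_of_almost_psub, Hba.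
    + apply countable_image, seg.
Qed.

End PretowerOfEmbedding.

(* [tr] runs through the first coordinates of the Cantor enumeration of [nat * nat],
   so every value recurs infinitely often, and [tr (S k) <= k < tm k]. *)
Definition binary_tr (k : nat) : nat :=
  match k with 0 => 0 | S k' => fst (Cantor.of_nat k') end.

Fixpoint binary_tm (k : nat) : nat :=
  match k with
  | 0 => 1
  | S k' => binary_tr (S k') + (binary_tm k' - binary_tr (S k')) * 2
  end.

Definition binary_type : cs_type :=
  {| tm := binary_tm; tn := fun _ => 2; tr := binary_tr |}.

Lemma binary_tr_le k : binary_tr (S k) <= k.
Proof.
  simpl. pose proof (Cantor.cancel_to_of k) as E.
  destruct (Cantor.of_nat k) as [x y]. simpl.
  pose proof (Cantor.to_nat_non_decreasing x y). lia.
Qed.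

Lemma binary_tm_gt k : k < binary_tm k.
Proof.
  induction k as [|k IH]; simpl; [lia|]. pose proof (binary_tr_le k). simpl in *. lia.
Qed.

Lemma binary_type_is_type : is_type binary_type.
Proof.
  split; [reflexivity|]. split; [simpl; lia|]. split; [|split].
  - intros r N. exists (S (Cantor.to_nat (r, N))).
    pose proof (Cantor.to_nat_non_decreasing r N). split; [lia|].
    change (fst (Cantor.of_nat (Cantor.to_nat (r, N))) = r).
    rewrite Cantor.cancel_of_to. reflexivity.
  - intros k. simpl. pose proof (binary_tr_le k). pose proof (binary_tm_gt k). simpl in *. lia.
  - reflexivity.
Qed.

Section ConstructionScheme.
Context {W : Type} (lt : W -> W -> Prop).
Hypothesis lt_irrefl : forall x, ~ lt x x.
Hypothesis lt_trans : forall x y z, lt x y -> lt y z -> lt x z.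
Context (t : cs_type) (Ht : is_type t) (Fam : list W -> Prop).
Hypothesis HCS : construction_scheme lt t Fam.

Lemma member_incr F : Fam F -> incr lt F.
Proof. pose proof HCS as (Hincr & _). apply Hincr. Qed.

Lemma rank_incr G k : rank Fam G k -> incr lt G.
Proof. intros [HG _]. apply member_incr, HG. Qed.

Lemma rank_length G k : rank Fam G k -> length G = tm t k.
Proof. pose proof HCS as (_ & _ & Hlen & _). apply Hlen. Qed.

Lemma rank_coherent k E F : rank Fam E k -> rank Fam F k ->
  init_seg lt (fun x => In x E /\ In x F) E /\
  init_seg lt (fun x => In x E /\ In x F) F.
Proof. pose proof HCS as (_ & _ & _ & Hcoh & _). apply Hcoh. Qed.

Lemma rank_S_decomp k F : rank Fam F (S k) -> exists Fs R, decomp lt Fam t k F Fs R.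
Proof.
  pose proof HCS as (_ & _ & _ & _ & Hdec). intros HF.
  destruct (Hdec k F HF) as (Fs & R & HD & _). eauto.
Qed.

Lemma has_rank F : Fam F -> exists k, rank Fam F k.
Proof.
  intros HF.
  assert (HN : forall G, Fam G -> NoDup G).
  { intros G HG. apply (StronglySorted_NoDup lt lt_irrefl), member_incr, HG. }
  destruct (exists_last_of_bounded (chain_below Fam F) (length F)) as (c & H1 & H2).
  - exists []. repeat split; auto. simpl. repeat constructor.
  - intros c (ch & <- & Hch & HS). destruct ch as [|x ch]; simpl; [lia|].
    enough (length x + length ch < length F) by lia.
    apply psub_chain_length; auto. eapply Forall_impl; [|exact Hch]. exact HN.
  - exists c. repeat split; auto.
Qed.

Lemma tm_lt_S k : tm t k < tm t (S k).
Proof.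
  pose proof Ht as (_ & Hn & _ & Hr & Hm). rewrite Hm.
  specialize (Hr k). specialize (Hn (S k) ltac:(lia)). nia.
Qed.

Lemma tm_le k k' : k <= k' -> tm t k <= tm t k'.
Proof. induction 1; auto. pose proof (tm_lt_S m). lia. Qed.

Definition index_at (k : nat) (x : W) (j : nat) : Prop :=
  exists G, rank Fam G k /\ nth_error G j = Some x.

(* By coherence, the elements of G below x are exactly those of G' below x. *)
Lemma index_at_unique k x j j' : index_at k x j -> index_at k x j' -> j = j'.
Proof.
  intros (G & HG & Hj) (G' & HG' & Hj').
  destruct (rank_coherent k G G' HG HG') as [[_ I1] [_ I2]].
  pose proof (rank_incr _ _ HG) as S1. pose proof (rank_incr _ _ HG') as S2.
  destruct (nth_error_split _ _ Hj) as (l1 & l2 & E1 & L1).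
  destruct (nth_error_split _ _ Hj') as (l1' & l2' & E1' & L1').
  assert (xG : In x G) by (eapply nth_error_In; eauto).
  assert (xG' : In x G') by (eapply nth_error_In; eauto).
  unfold incr in S1, S2. rewrite E1 in S1. rewrite E1' in S2.
  enough (l1 = l1') by congruence.
  apply (StronglySorted_ext lt lt_irrefl lt_trans).
  - apply StronglySorted_app_iff in S1 as (? & _ & _); auto.
  - apply StronglySorted_app_iff in S2 as (? & _ & _); auto.
  - intros y. rewrite (StronglySorted_prefix_iff lt lt_irrefl lt_trans _ _ _ S1 y).
    rewrite (StronglySorted_prefix_iff lt lt_irrefl lt_trans _ _ _ S2 y).
    rewrite <- E1, <- E1'. split; intros [Hy Hyx]; split; auto.
    + apply (I1 x y); auto.
    + apply (I2 x y); auto.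
Qed.

Lemma index_at_lt_tm k a j : index_at k a j -> j < tm t k.
Proof.
  intros (G & HG & Hj). rewrite <- (rank_length _ _ HG).
  apply nth_error_Some. congruence.
Qed.

Lemma index_lt_in_common_member k G a b : rank Fam G k -> In a G -> In b G -> lt a b ->
  exists i j, index_at k a i /\ index_at k b j /\ i < j.
Proof.
  intros HG aG bG ab.
  apply In_nth_error in aG as (i & Hi). apply In_nth_error in bG as (j & Hj).
  exists i, j. split; [exists G; auto|split; [exists G; auto|]].
  eapply (StronglySorted_nth_error_index_lt lt lt_irrefl lt_trans); eauto.
  apply (rank_incr _ _ HG).
Qed.

Definition list_minus (E R : list W) : list W :=
  filter (fun x => if excluded_middle_informative (In x R) then false else true) E.

Lemma In_list_minus E R x : In x (list_minus E R) <-> In x E /\ ~ In x R.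
Proof.
  unfold list_minus. rewrite filter_In.
  destruct (excluded_middle_informative (In x R)); intuition congruence.
Qed.

Section Decomposition.
Variables (k : nat) (E : list W) (Es : list (list W)) (R : list W).
Hypothesis HD : decomp lt Fam t k E Es R.

Lemma decomp_block_rank b Eb : nth_error Es b = Some Eb -> rank Fam Eb k.
Proof.
  intros Hb. pose proof HD as (_ & HF & _). rewrite Forall_forall in HF.
  apply HF. eapply nth_error_In; eauto.
Qed.

Lemma decomp_two_le_length : 2 <= length Es.
Proof.
  pose proof HD as (HL & _). pose proof Ht as (_ & Hn & _).
  rewrite HL. apply Hn. lia.
Qed.

Lemma decomp_first_block : exists E0, nth_error Es 0 = Some E0.
Proof.
  pose proof decomp_two_le_length.
  destruct (nth_error Es 0) as [E0|] eqn:HE0; eauto.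
  apply nth_error_None in HE0. lia.
Qed.

Lemma decomp_root_incl b Eb : nth_error Es b = Some Eb -> incl R Eb.
Proof.
  intros Hb x Hx. pose proof decomp_two_le_length.
  pose proof HD as (_ & _ & _ & Hroot & _).
  set (b' := if Nat.eq_dec b 0 then 1 else 0).
  assert (b' < length Es /\ b <> b') as [Hb'len Hbb']
    by (unfold b'; destruct (Nat.eq_dec b 0); lia).
  destruct (nth_error Es b') as [Eb'|] eqn:Hb'.
  - exact (proj1 (proj2 (Hroot b b' Eb Eb' Hbb' Hb Hb' x) Hx)).
  - apply nth_error_None in Hb'. lia.
Qed.

Lemma decomp_block_minus_nonempty b Eb : nth_error Es b = Some Eb -> list_minus Eb R <> [].
Proof.
  intros Hb Hnil.
  assert (Hsub : incl Eb R).
  { intros x Hx. apply NNPP. intros HxR.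
    assert (Hin : In x (list_minus Eb R)) by (apply In_list_minus; auto).
    rewrite Hnil in Hin. contradiction. }
  pose proof (decomp_block_rank _ _ Hb) as Hrk.
  pose proof (NoDup_incl_length
    (StronglySorted_NoDup lt lt_irrefl _ (rank_incr _ _ Hrk)) Hsub) as Hle.
  rewrite (rank_length _ _ Hrk) in Hle.
  pose proof HD as (_ & _ & _ & _ & _ & HLR & _). pose proof Ht as (_ & _ & _ & Hrm & _).
  specialize (Hrm k). lia.
Qed.

Lemma decomp_blocks_minus_sorted :
  StronglySorted (nonempty_list_lt lt) (map (fun Eb => list_minus Eb R) Es).
Proof.
  apply Sorted_StronglySorted; [apply nonempty_list_lt_trans; auto|].
  apply Sorted_of_nth_error. intros i a b Ha Hb.
  rewrite nth_error_map in Ha, Hb.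
  destruct (nth_error Es i) as [Ei|] eqn:Hi; [|discriminate].
  destruct (nth_error Es (S i)) as [Ej|] eqn:Hj; [|discriminate].
  injection Ha as <-. injection Hb as <-.
  split; [eapply decomp_block_minus_nonempty; eauto|].
  split; [eapply decomp_block_minus_nonempty; eauto|].
  intros x y Hx Hy. apply In_list_minus in Hx, Hy.
  pose proof HD as (_ & _ & _ & _ & _ & _ & _ & Hnext). apply (Hnext i Ei Ej); tauto.
Qed.

Lemma decomp_root_below b Eb : nth_error Es b = Some Eb -> list_lt lt R (list_minus Eb R).
Proof.
  intros Hb x y Hx Hy. destruct decomp_first_block as (E0 & HE0).
  pose proof HD as (_ & _ & _ & _ & _ & _ & Hfirst & _).
  destruct b as [|b].
  - rewrite HE0 in Hb. injection Hb as <-. apply In_list_minus in Hy.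
    apply (Hfirst E0); auto.
  - assert (nonempty_list_lt lt (list_minus E0 R) (list_minus Eb R)) as (Hne & _ & Hlt).
    { apply (StronglySorted_nth_error_lt _ _ decomp_blocks_minus_sorted 0 (S b)); try lia;
        rewrite nth_error_map; [rewrite HE0|rewrite Hb]; reflexivity. }
    destruct (list_minus E0 R) as [|z l] eqn:Hz; [congruence|].
    assert (Hz0 : In z (list_minus E0 R)) by (rewrite Hz; left; auto).
    apply In_list_minus in Hz0 as [HzE0 HzR].
    apply lt_trans with z; [apply (Hfirst E0); auto|apply Hlt; simpl; auto].
Qed.

Lemma decomp_block_eq b Eb : nth_error Es b = Some Eb -> Eb = R ++ list_minus Eb R.
Proof.
  intros Hb. pose proof (rank_incr _ _ (decomp_block_rank _ _ Hb)) as Hs.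
  pose proof HD as (_ & _ & _ & _ & HR & _).
  apply (StronglySorted_ext lt lt_irrefl lt_trans); auto.
  - apply StronglySorted_app_iff. repeat split; auto.
    + apply StronglySorted_filter; auto.
    + apply (decomp_root_below b); auto.
  - intros x. rewrite in_app_iff, In_list_minus. split.
    + intros Hx. destruct (classic (In x R)); auto.
    + intros [Hx|[Hx _]]; auto. apply (decomp_root_incl b Eb Hb); auto.
Qed.

Lemma decomp_block_minus_length b Eb : nth_error Es b = Some Eb ->
  length (list_minus Eb R) = tm t k - tr t (S k).
Proof.
  intros Hb. pose proof (rank_length _ _ (decomp_block_rank _ _ Hb)) as HL.
  rewrite (decomp_block_eq _ _ Hb), length_app in HL.
  pose proof HD as (_ & _ & _ & _ & _ & HLR & _). lia.
Qed.

Lemma decomp_eq : rank Fam E (S k) ->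
  E = R ++ concat (map (fun Eb => list_minus Eb R) Es).
Proof.
  intros HE. pose proof HD as (_ & _ & HU & _ & HR & _).
  destruct decomp_first_block as (E0 & HE0).
  apply (StronglySorted_ext lt lt_irrefl lt_trans); [exact (rank_incr _ _ HE)| |].
  - apply StronglySorted_app_iff. repeat split; auto.
    + apply StronglySorted_concat.
      * apply Forall_forall. intros d Hd. apply in_map_iff in Hd as (Eb & <- & HEb).
        apply In_nth_error in HEb as (b & Hb).
        apply StronglySorted_filter, (rank_incr _ _ (decomp_block_rank _ _ Hb)).
      * apply (StronglySorted_impl (nonempty_list_lt lt)); [|exact decomp_blocks_minus_sorted].
        intros a b (_ & _ & Hab). exact Hab.
    + intros x y Hx Hy. apply in_concat in Hy as (d & Hd & Hy).
      apply in_map_iff in Hd as (Eb & <- & HEb). apply In_nth_error in HEb as (b & Hb).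
      apply (decomp_root_below b Eb Hb); auto.
  - intros x. rewrite in_app_iff, HU. split.
    + intros (Eb & HEb & Hx). destruct (classic (In x R)); auto. right.
      apply in_concat. exists (list_minus Eb R).
      split; [apply (in_map (fun Eb => list_minus Eb R)); auto|apply In_list_minus; auto].
    + intros [Hx|Hx].
      * exists E0. split; [eapply nth_error_In; eauto|apply (decomp_root_incl 0); auto].
      * apply in_concat in Hx as (d & Hd & Hx).
        apply in_map_iff in Hd as (Eb & <- & HEb).
        apply In_list_minus in Hx. exists Eb. tauto.
Qed.

End Decomposition.

Lemma decomp_blocks_minus_same_length k E Es R E' Es' R' :
  decomp lt Fam t k E Es R -> decomp lt Fam t k E' Es' R' ->
  forall i d d', nth_error (map (fun Eb => list_minus Eb R) Es) i = Some d ->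
  nth_error (map (fun Eb => list_minus Eb R') Es') i = Some d' -> length d = length d'.
Proof.
  intros HD HD' i d d' Hd Hd'. rewrite nth_error_map in Hd, Hd'.
  destruct (nth_error Es i) as [Ei|] eqn:HEi; [|discriminate].
  destruct (nth_error Es' i) as [Ei'|] eqn:HEi'; [|discriminate].
  injection Hd as <-. injection Hd' as <-.
  rewrite (decomp_block_minus_length _ _ _ _ HD _ _ HEi).
  rewrite (decomp_block_minus_length _ _ _ _ HD' _ _ HEi'). reflexivity.
Qed.

(* A member of rank k+1 lists its root R, then its blocks minus R, all of the same
   length; so an index determines the block and the offset in it. *)
Lemma same_index_in_blocks k E E' j x x' :
  rank Fam E (S k) -> rank Fam E' (S k) ->
  nth_error E j = Some x -> nth_error E' j = Some x' ->
  exists G G' i, rank Fam G k /\ rank Fam G' k /\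
    nth_error G i = Some x /\ nth_error G' i = Some x'.
Proof.
  intros HE HE' Hx Hx'.
  destruct (rank_S_decomp _ _ HE) as (Es & R & HD).
  destruct (rank_S_decomp _ _ HE') as (Es' & R' & HD').
  pose proof HD as (HL & _ & _ & _ & _ & HLR & _).
  pose proof HD' as (HL' & _ & _ & _ & _ & HLR' & _).
  assert (HRR' : length R' = length R) by lia.
  rewrite (decomp_eq _ _ _ _ HD HE) in Hx. rewrite (decomp_eq _ _ _ _ HD' HE') in Hx'.
  destruct (Nat.lt_ge_cases j (length R)) as [Hj|Hj].
  - destruct (decomp_first_block _ _ _ _ HD) as (E0 & HE0).
    destruct (decomp_first_block _ _ _ _ HD') as (E0' & HE0').
    exists E0, E0', j. split; [|split];
      [exact (decomp_block_rank _ _ _ _ HD _ _ HE0)|exact (decomp_block_rank _ _ _ _ HD' _ _ HE0')|].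
    rewrite (decomp_block_eq _ _ _ _ HD _ _ HE0), (decomp_block_eq _ _ _ _ HD' _ _ HE0').
    rewrite nth_error_app1 in Hx by lia. rewrite nth_error_app1 in Hx' by lia.
    rewrite !nth_error_app1 by lia. auto.
  - rewrite nth_error_app2 in Hx by lia. rewrite nth_error_app2 in Hx' by lia.
    rewrite HRR' in Hx'.
    destruct (nth_error_concat_same_shape
      (map (fun Eb => list_minus Eb R) Es) (map (fun Eb => list_minus Eb R') Es'))
      with (j := j - length R) (x := x) as (a & d & d' & o & Ha & Ha' & Hd & Hd'); auto.
    + rewrite !length_map. lia.
    + exact (decomp_blocks_minus_same_length k E Es R E' Es' R' HD HD').
    + rewrite nth_error_map in Ha, Ha'.
      destruct (nth_error Es a) as [Ea|] eqn:HEa; [|discriminate].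
      destruct (nth_error Es' a) as [Ea'|] eqn:HEa'; [|discriminate].
      injection Ha as <-. injection Ha' as <-.
      exists Ea, Ea', (length R + o). split; [|split];
        [exact (decomp_block_rank _ _ _ _ HD _ _ HEa)|exact (decomp_block_rank _ _ _ _ HD' _ _ HEa')|].
      rewrite (decomp_block_eq _ _ _ _ HD _ _ HEa), (decomp_block_eq _ _ _ _ HD' _ _ HEa').
      rewrite !nth_error_app2 by lia. rewrite HRR'.
      replace (length R + o - length R) with o by lia.
      split; [exact Hd|]. rewrite <- Hd'. exact Hx'.
Qed.

Lemma index_at_transfer k E E' j x x' p :
  rank Fam E k -> rank Fam E' k -> nth_error E j = Some x -> nth_error E' j = Some x' ->
  index_at k x p -> index_at k x' p.
Proof.
  intros HE HE' Hx Hx' Hp.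
  assert (p = j) as -> by (apply (index_at_unique k x); auto; exists E; auto).
  exists E'. auto.
Qed.

Lemma same_index_same_lower_indices k : forall E E' j x x',
  rank Fam E k -> rank Fam E' k -> nth_error E j = Some x -> nth_error E' j = Some x' ->
  forall k' p, k' <= k -> index_at k' x p -> index_at k' x' p.
Proof.
  induction k as [|k IH]; intros E E' j x x' HE HE' Hx Hx' k' p Hk Hp.
  - assert (k' = 0) as -> by lia. exact (index_at_transfer 0 E E' j x x' p HE HE' Hx Hx' Hp).
  - destruct (Nat.eq_dec k' (S k)) as [->|Hne];
      [exact (index_at_transfer (S k) E E' j x x' p HE HE' Hx Hx' Hp)|].
    destruct (same_index_in_blocks k E E' j x x' HE HE' Hx Hx')
      as (G & G' & i & HG & HG' & Hi & Hi').
    apply (IH G G' i x x'); auto. lia.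
Qed.

Lemma rank_descend k m : k <= m -> forall H x, rank Fam H m -> In x H ->
  exists G, rank Fam G k /\ In x G /\ incl G H.
Proof.
  induction 1 as [|m Hkm IH]; intros H x HH Hx.
  - exists H. split; [|split]; auto. apply incl_refl.
  - destruct (rank_S_decomp _ _ HH) as (Es & R & HD).
    pose proof HD as (_ & _ & HU & _).
    destruct (proj1 (HU x) Hx) as (E & HE & HxE).
    apply In_nth_error in HE as (b & Hb).
    destruct (IH E x) as (G & HG & HxG & HGE); [eapply decomp_block_rank; eauto|auto|].
    exists G. split; [|split]; auto.
    intros y Hy. apply HU. exists E. split; [eapply nth_error_In; eauto|auto].
Qed.

Hypothesis W_uncountable : uncountable (fun _ : W => True).

Lemma exists_high_rank_superset (l : list W) k :
  exists H m, rank Fam H m /\ k <= m /\ incl l H.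
Proof.
  destruct (uncountable_long_NoDup W_uncountable (S (tm t k))) as (L & NL & LL).
  pose proof HCS as (_ & Hcover & _).
  destruct (Hcover (l ++ L)) as (H & FH & HlH).
  destruct (has_rank H FH) as (m & Hm). exists H, m. split; [exact Hm|split].
  - destruct (Nat.le_gt_cases k m) as [?|Hlt]; auto. exfalso.
    assert (HLH : length L <= length H).
    { apply NoDup_incl_length; auto. intros x Hx; apply HlH, in_or_app; auto. }
    rewrite (rank_length _ _ Hm) in HLH. pose proof (tm_le m k ltac:(lia)). lia.
  - intros x Hx. apply HlH, in_or_app; auto.
Qed.

Lemma member_of_rank x k : exists G, rank Fam G k /\ In x G.
Proof.
  destruct (exists_high_rank_superset [x] k) as (H & m & Hm & km & HxH).
  destruct (rank_descend k m km H x Hm) as (G & ? & ? & _); [apply HxH; left; auto|eauto].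
Qed.

Lemma index_at_exists x k : exists j, index_at k x j.
Proof.
  destruct (member_of_rank x k) as (G & HG & xG).
  apply In_nth_error in xG as (j & Hj). exists j, G. auto.
Qed.

(* Descending from a high member containing b to rank K, coherence with E pulls a along. *)
Lemma common_member_above a b E K k : lt a b -> rank Fam E K -> In a E -> In b E -> K <= k ->
  exists G, rank Fam G k /\ In a G /\ In b G.
Proof.
  intros ab HE aE bE Kk.
  destruct (exists_high_rank_superset [b] k) as (H & m & Hm & km & HbH).
  destruct (rank_descend k m km H b Hm) as (G & HG & bG & _); [apply HbH; left; auto|].
  destruct (rank_descend K k Kk G b HG bG) as (P & HP & bP & HPG).
  exists G. split; [exact HG|split; auto]. apply HPG.
  destruct (rank_coherent K E P HE HP) as [[_ Hseg] _].
  apply (Hseg b a); auto.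
Qed.

Lemma eventually_index_lt a b : lt a b -> exists K, forall k, K <= k ->
  exists i j, index_at k a i /\ index_at k b j /\ i < j.
Proof.
  intros ab. destruct (exists_high_rank_superset [a; b] 0) as (H & m & Hm & _ & Hab).
  exists m. intros k mk.
  destruct (common_member_above a b H m k ab Hm) as (G & HG & aG & bG); auto;
    [apply Hab; simpl; auto..|].
  apply (index_lt_in_common_member k G); auto.
Qed.

Definition tower_set (a : W) (n : nat) : Prop :=
  exists k i j, n = Cantor.to_nat (k, i) /\ index_at k a j /\ i <= j.

Lemma tower_set_infinite a : infinite_nat (tower_set a).
Proof.
  intros n. destruct (index_at_exists a n) as (j & Hj).
  exists (Cantor.to_nat (n, 0)). split.
  - pose proof (Cantor.to_nat_non_decreasing n 0). lia.
  - exists n, 0, j. repeat split; auto. lia.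
Qed.

Lemma tower_set_almost_psub a b : lt a b -> almost_psub (tower_set a) (tower_set b).
Proof.
  intros ab. destruct (eventually_index_lt a b ab) as (K & HK). split.
  - exists (S (Cantor.to_nat (K, tm t K))). intros n [(k & i & j & -> & Hj & Hij) Hn].
    destruct (Nat.le_gt_cases K k) as [Kk|kK].
    + exfalso. destruct (HK k Kk) as (i0 & j0 & Ha & Hb & Hlt).
      assert (j = i0) as <- by (eapply index_at_unique; eauto).
      apply Hn. exists k, i, j0. repeat split; auto. lia.
    + pose proof (index_at_lt_tm _ _ _ Hj). pose proof (tm_le k K ltac:(lia)).
      pose proof (to_nat_le_mono k i K (tm t K) ltac:(lia) ltac:(lia)). lia.
  - intros n. destruct (HK (Nat.max n K) ltac:(lia)) as (i0 & j0 & Ha & Hb & Hlt).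
    exists (Cantor.to_nat (Nat.max n K, j0)). split.
    + pose proof (Cantor.to_nat_non_decreasing (Nat.max n K) j0). lia.
    + split; [exists (Nat.max n K), j0, j0; repeat split; auto|].
      intros (k' & i' & j' & E & Hj' & Hij').
      apply Cantor.to_nat_inj in E. injection E as <- <-.
      assert (j' = i0) by (eapply index_at_unique; eauto). lia.
Qed.

Lemma tower_set_incl l a b j G : lt a b -> index_at l a j -> index_at l b j ->
  rank Fam G (S l) -> In a G -> In b G -> forall n, tower_set a n -> tower_set b n.
Proof.
  intros ab Ha Hb HG aG bG n (k & i & p & -> & Hp & Hip).
  destruct (Nat.le_gt_cases k l) as [kl|lk].
  - exists k, i, p. repeat split; auto.
    destruct Ha as (E & HE & Ea). destruct Hb as (E' & HE' & Eb).
    apply (same_index_same_lower_indices l E E' j a b); auto.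
  - destruct (common_member_above a b G (S l) k ab HG aG bG lk) as (G' & HG' & aG' & bG').
    destruct (index_lt_in_common_member k G' a b HG' aG' bG' ab)
      as (i0 & j0 & Ha0 & Hb0 & Hlt).
    assert (p = i0) as -> by (eapply index_at_unique; eauto).
    exists k, i, j0. repeat split; auto. lia.
Qed.

Lemma captured_singletons_tower_incl l F C : captures lt Fam t l F C -> length C = 2 ->
  (forall c, In c C -> exists a, c = [a]) ->
  exists a b, In [a] C /\ In [b] C /\ lt a b /\ forall n, tower_set a n -> tower_set b n.
Proof.
  intros (Hl & HF & _ & _ & Fs & R & HD & cs & Hperm & Hcs) HC Hsing.
  assert (Hin : forall c, In c cs -> In c C) by exact (fun c => Permutation_in c (Permutation_sym Hperm)).
  assert (Hcs2 : length cs = 2) by (rewrite <- (Permutation_length Hperm); auto).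
  destruct cs as [|c0 [|c1 [|? ?]]]; simpl in Hcs2; try discriminate.
  destruct (Hsing c0 (Hin c0 (or_introl eq_refl))) as (a & ->).
  destruct (Hsing c1 (Hin c1 (or_intror (or_introl eq_refl)))) as (b & ->).
  destruct (Hcs 0 [a] eq_refl) as (F0 & HF0 & Ha0 & (a' & Ha' & HaR) & _).
  destruct (Hcs 1 [b] eq_refl) as (F1 & HF1 & Hb1 & (b' & Hb' & HbR) & c0 & F0' & Hc0 & HF0' & Hphi).
  simpl in Hc0. injection Hc0 as <-. rewrite HF0 in HF0'. injection HF0' as <-.
  destruct Ha' as [<-|[]]. destruct Hb' as [<-|[]].
  destruct (proj1 (Hphi b) (or_introl eq_refl)) as (j & a' & Hj0 & [<-|[]] & Hj1).
  pose proof HD as (_ & _ & HU & _ & _ & _ & _ & Hnext).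
  assert (ab : lt a b).
  { apply (Hnext 0 F0 F1); auto; split; auto; [apply Ha0|apply Hb1]; left; auto. }
  exists a, b. split; [|split; [|split]]; auto; [apply Hin; simpl; auto..|].
  replace l with (S (l - 1)) in HF by lia.
  apply (tower_set_incl (l - 1) a b j F); auto.
  - exists F0. split; auto. eapply decomp_block_rank; eauto.
  - exists F1. split; auto. eapply decomp_block_rank; eauto.
  - apply HU. exists F0. split; [eapply nth_error_In; eauto|apply Ha0; left; auto].
  - apply HU. exists F1. split; [eapply nth_error_In; eauto|apply Hb1; left; auto].
Qed.

Lemma uncountable_tower_incl : n_capturing lt Fam t 2 -> forall X : W -> Prop, uncountable X ->
  exists a b, X a /\ X b /\ tower_set a <> tower_set b /\
    forall n, tower_set a n -> tower_set b n.
Proof.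
  intros Hcap X HX.
  set (singletons := fun c : list W => exists a, c = [a] /\ X a).
  assert (Hsing : uncountable singletons).
  { intros (f & Hf). apply HX. exists (fun a => f [a]). intros a b Ha Hb E.
    assert ([a] = [b]) as [=] by (apply Hf; auto; red; eauto). auto. }
  destruct (Hcap singletons) with (k := 0) as (C & l & F & _ & HC & HCs & _ & Hcapt); auto.
  { intros c (a & -> & _). repeat constructor. }
  rewrite Forall_forall in HCs.
  destruct (captured_singletons_tower_incl l F C Hcapt HC) as (a & b & Ha & Hb & ab & Hincl).
  { intros c Hc. destruct (HCs c Hc) as (a & -> & _). eauto. }
  destruct (HCs _ Ha) as (a' & [= <-] & Xa). destruct (HCs _ Hb) as (b' & [= <-] & Xb).
  exists a, b. repeat split; auto. intros E.
  apply (almost_psub_irrefl (tower_set b)). rewrite <- E at 1.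
  apply tower_set_almost_psub; auto.
Qed.

End ConstructionScheme.

Theorem mainTheorem13 (W : Type) (lt : W -> W -> Prop) :
  omega1_like lt -> CA lt 2 ->
  exists T : (nat -> Prop) -> Prop, omega1_pretower T /\ suslin T.
Proof.
  intros Hlt HCA. pose proof Hlt as (irr & trn & _ & _ & unc & _).
  destruct (HCA binary_type binary_type_is_type) as (Fam & HCS & Hcap);
    [intros k _; reflexivity|].
  exists (fun A => exists a, A = tower_set Fam a). split.
  - apply (omega1_pretower_image lt); auto.
    + exact (tower_set_infinite lt irr binary_type binary_type_is_type Fam HCS unc).
    + exact (tower_set_almost_psub lt irr trn binary_type binary_type_is_type Fam HCS unc).
  - apply suslin_image.
    exact (uncountable_tower_incl lt irr trn binary_type binary_type_is_type Fam HCS unc Hcap).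
Qed.
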